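(* For every integer $n\ge 2$, $$\mathrm{spt}1_{do}(n)=2p_{de}(n-1)+p_{do}(n-1)\qquad\text{and}\qquad \mathrm{spt}1'_{do}(n)=-p'_{do}(n-1).$$
   Context: For a partition $\pi$, $s(\pi)$ is its smallest part. $\mathrm{Spt}1_{do}(n)$ is the set of partitions $\pi$ of $n$ in which $s(\pi)$ occurs exactly once and the remaining parts are pairwise distinct and each has parity different from that of $s(\pi)$. $B_0(1,n)$ (resp. $B_1(1,n)$) is the number of $\pi\in\mathrm{Spt}1_{do}(n)$ whose number of parts greater than $s(\pi)$ is even (resp. odd); $\mathrm{spt}1_{do}(n)=B_0(1,n)+B_1(1,n)$ and $\mathrm{spt}1'_{do}(n)=B_0(1,n)-B_1(1,n)$. $p_{de}(n)$ (resp. $p_{do}(n)$) is the number of partitions of $n$ into distinct even (resp. distinct odd) parts; $p'_{do}(n)$ is the number of partitions of $n$ into distinct odd parts with an even number of parts minus the number with an odd number of parts; all equal $1$ at $n=0$. *)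

From mathcomp Require Import all_boot all_order all_algebra.
Set Implicit Arguments. Unset Strict Implicit. Unset Printing Implicit Defensive.

(* A partition of n is represented by its multiplicity function:
   f : {ffun 'I_n -> 'I_n.+1}, where f i is the number of times the part
   (i.+1) occurs; the parts are 1..n, each with multiplicity at most n. *)
Definition ptn (n : nat) := {ffun 'I_n -> 'I_n.+1}.

Definition partv n (i : 'I_n) : nat := i.+1.

Definition is_partition n (f : ptn n) : bool :=
  \sum_(i < n) partv i * f i == n.

Definition nparts n (f : ptn n) : nat := \sum_(i < n) (f i : nat).

Definition spt1do_at n (f : ptn n) (i : 'I_n) : bool :=
  [&& (f i == 1 :> nat),
      [forall j : 'I_n, (j < i) ==> (f j == 0 :> nat)] &
      [forall j : 'I_n, (i < j) ==>
         ((f j <= 1) && ((0 < f j) ==> (odd (partv j) != odd (partv i))))]].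

Definition nparts_gt n (f : ptn n) (i : 'I_n) : nat :=
  \sum_(j < n | i < j) (f j : nat).

Definition Spt1do n : {set ptn n} :=
  [set f | is_partition f && [exists i, spt1do_at f i]].

Definition B0 n : nat :=
  #|[set f : ptn n | is_partition f &&
       [exists i, spt1do_at f i && ~~ odd (nparts_gt f i)]]|.
Definition B1 n : nat :=
  #|[set f : ptn n | is_partition f &&
       [exists i, spt1do_at f i && odd (nparts_gt f i)]]|.

Definition spt1do n : nat := B0 n + B1 n.
Definition spt1do' n : int := (B0 n)%:Z - (B1 n)%:Z.

Definition distinct_parity n (par : bool) (f : ptn n) : bool :=
  [forall i : 'I_n, (f i <= 1) && ((0 < f i) ==> (odd (partv i) == par))].

Definition pde n : nat := #|[set f : ptn n | is_partition f && distinct_parity false f]|.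
Definition pdo n : nat := #|[set f : ptn n | is_partition f && distinct_parity true f]|.
Definition pdo' n : int :=
  (#|[set f : ptn n | [&& is_partition f, distinct_parity true f & ~~ odd (nparts f)]]|)%:Z
  - (#|[set f : ptn n | [&& is_partition f, distinct_parity true f & odd (nparts f)]]|)%:Z.

From mathcomp Require Import all_boot all_order all_algebra zify.
Set Implicit Arguments. Unset Strict Implicit. Unset Printing Implicit Defensive.

(* Lowering the smallest part s of a partition in Spt1_do(n) by one (deleting
   it when s = 1) yields a partition of n - 1 into distinct parts, all of the
   parity of s - 1.  It is inverted by raising the smallest part again, except
   that a partition into distinct even parts has a second preimage, obtained by
   adding a part 1.  The number of parts drops exactly when s = 1, which
   produces the signs in the second identity. *)

Lemma card_in_bij (T U : finType) (A : {set T}) (B : {set U}) (f : T -> U) (g : U -> T) :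
  {in A, forall x, f x \in B} -> {in B, forall y, g y \in A} ->
  {in A, cancel f g} -> {in B, cancel g f} -> #|A| = #|B|.
Proof.
move=> fAB gBA fK gK; rewrite -(card_in_imset (can_in_inj fK)).
apply: eq_card => y; apply/imsetP/idP => [[x Ax ->]|By]; first exact: fAB.
by exists (g y); rewrite ?gK ?gBA.
Qed.

Definition wsum L (w h : nat -> nat) := \sum_(i < L) w i.+1 * h i.+1.

Lemma wsum_recr L w h : wsum L.+1 w h = wsum L w h + w L.+1 * h L.+1.
Proof. exact: big_ord_recr. Qed.

Lemma eq_wsum L w h1 h2 : (forall k, 0 < k -> h1 k = h2 k) -> wsum L w h1 = wsum L w h2.
Proof. by move=> eq_h; apply: eq_bigr => i _; rewrite eq_h. Qed.

Lemma wsum_eq1 L w a : wsum L w (fun k => k == a) = if 0 < a <= L then w a else 0.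
Proof.
elim: L => [|L IHL]; first by rewrite /wsum big_ord0; case: a.
rewrite wsum_recr IHL; case: (eqVneq L.+1 a) => [<-|neLa].
  by rewrite ltnn andbF muln1 leqnn.
by rewrite muln0 addn0 (leq_eqVlt a L.+1) ltnS (eq_sym a) (negbTE neLa).
Qed.

Lemma wsum_move L w h h' a b : (forall k, 0 < k -> h' k + (k == a) = h k + (k == b)) ->
  wsum L w h' + (if 0 < a <= L then w a else 0) = wsum L w h + (if 0 < b <= L then w b else 0).
Proof.
move=> eq_h; rewrite -!wsum_eq1 /wsum -!big_split.
by apply: eq_bigr => i _; rewrite /= -!mulnDr eq_h.
Qed.

Definition distinct_parity_mult (par : bool) (h : nat -> nat) :=
  forall k, 0 < k -> h k <= 1 /\ (0 < h k -> odd k = par).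

Definition spt1do_mult s (h : nat -> nat) :=
  [/\ 0 < s, h s = 1, (forall k, 0 < k < s -> h k = 0) &
      forall k, s < k -> h k <= 1 /\ (0 < h k -> odd k != odd s)].

Section Multiplicity.
Variable n : nat.
Implicit Types (f : ptn n) (h : nat -> nat).

Definition mult f k : nat :=
  if k is k'.+1 then (if insub k' is Some i then (f i : nat) else 0) else 0.

Lemma mult_ord f (i : 'I_n) : mult f i.+1 = f i.
Proof. by rewrite /mult valK. Qed.

Lemma mult_gt f k : n < k -> mult f k = 0.
Proof. by case: k => // k; rewrite ltnS => nk /=; rewrite insubF // ltnNge nk. Qed.

Lemma mult_cases f k : mult f k = 0 \/ exists i : 'I_n, k = i.+1.
Proof.
case: k => [|k]; first by left.
by case: (ltnP k n) => [kn|nk]; [right; exists (Ordinal kn) | left; apply: mult_gt].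
Qed.

Lemma mult_le f k : 0 < mult f k -> k <= n.
Proof. by case: (leqP k n) => // /(mult_gt f) ->. Qed.

Lemma mult_inj f1 f2 : (forall k, 0 < k -> mult f1 k = mult f2 k) -> f1 = f2.
Proof. by move=> eq12; apply/ffunP => i; apply/val_inj; rewrite /= -!mult_ord eq12. Qed.

Definition ptn_of h : ptn n := [ffun i : 'I_n => inord (h i.+1)].

Lemma mult_ptn_of h : (forall k, 0 < k -> h k <= n) -> (forall k, n < k -> h k = 0) ->
  forall k, 0 < k -> mult (ptn_of h) k = h k.
Proof.
move=> hn h0 [//|k] _; case: (leqP k.+1 n) => [kn|nk]; last by rewrite mult_gt ?h0.
by rewrite -[k]/(Ordinal kn : nat) mult_ord ffunE inordK // ltnS hn.
Qed.

Lemma wsum_mult_succ w f : wsum n.+1 w (mult f) = wsum n w (mult f).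
Proof. by rewrite wsum_recr mult_gt // muln0 addn0. Qed.

Lemma is_partitionE f : is_partition f = (wsum n id (mult f) == n).
Proof. by rewrite /is_partition /wsum; congr (_ == _); apply: eq_bigr => i _; rewrite mult_ord. Qed.

Lemma npartsE f : nparts f = wsum n (fun=> 1) (mult f).
Proof. by apply: eq_bigr => i _; rewrite mult_ord mul1n. Qed.

Lemma distinct_parityP par f : distinct_parity par f <-> distinct_parity_mult par (mult f).
Proof.
split=> [/forallP dpf k _ | dpf].
  case: (mult_cases f k) => [->//|[i ->]]; rewrite mult_ord.
  by case/andP: (dpf i) => -> /implyP odd_i; split=> // /odd_i/eqP.
apply/forallP => i; case: (dpf i.+1 isT); rewrite mult_ord => -> odd_i /=.
by apply/implyP => /odd_i/eqP.
Qed.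

Lemma spt1do_atP f i : spt1do_at f i <-> spt1do_mult i.+1 (mult f).
Proof.
split=> [/and3P[/eqP fi1 /forallP lt_i /forallP gt_i] | [_ fi1 lt_i gt_i]].
  split; rewrite ?mult_ord //.
    move=> k /andP[k0 ki]; case: (mult_cases f k) => [//|[j kj]].
    by move: ki; rewrite kj mult_ord ltnS => ji; apply/eqP/(implyP (lt_i j)).
  move=> k ik; case: (mult_cases f k) => [->//|[j kj]]; rewrite kj mult_ord.
  by move: ik; rewrite kj ltnS => /(implyP (gt_i j))/andP[-> /implyP].
rewrite /spt1do_at -mult_ord fi1 eqxx /=; apply/andP; split; apply/forallP => j.
  by apply/implyP => ji; rewrite -mult_ord lt_i.
apply/implyP => ij; rewrite -mult_ord; case: (gt_i j.+1 ij) => -> par_j /=.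
by apply/implyP.
Qed.

Lemma nparts_gtE f i : spt1do_at f i -> nparts_gt f i = (nparts f).-1.
Proof.
case/and3P=> /eqP fi1 /forallP lt_i _.
rewrite /nparts /nparts_gt [in RHS](bigID (fun j : 'I_n => i < j)) /=.
rewrite [X in _ + X](bigD1 i) ?ltnn //= fi1 [X in 1 + X]big1 ?addn0 ?addn1 //.
move=> j /andP[ij ji]; apply/eqP/(implyP (lt_i j)).
by rewrite ltn_neqAle leqNgt ij andbT; apply: contra ji => /eqP/val_inj ->.
Qed.

Definition smallest f : nat := find (fun k => 0 < mult f k) (iota 0 n.+1).

Lemma smallestP f t : 0 < mult f t -> (forall k, 0 < k < t -> mult f k = 0) -> smallest f = t.
Proof.
move=> ft lt_t; have tn : t < n.+1 := mult_le ft.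
have has_f : has (fun k => 0 < mult f k) (iota 0 n.+1).
  by apply/hasP; exists t; rewrite ?mem_iota.
have f_s : 0 < mult f (smallest f).
  move: (nth_find 0 has_f); rewrite nth_iota //.
  by rewrite has_find size_iota in has_f.
apply/eqP; rewrite eqn_leq; apply/andP; split.
  by rewrite leqNgt; apply/negP => /(before_find 0); rewrite nth_iota // ft.
rewrite leqNgt; apply/negP; move: f_s.
by case: (smallest f) => // k k0 kt; rewrite lt_t in k0.
Qed.

Lemma smallest_spt1do_mult f s : spt1do_mult s (mult f) -> smallest f = s.
Proof. by case=> s0 fs lt_s _; apply: smallestP; rewrite ?fs. Qed.

Lemma Spt1doP f : f \in Spt1do n <-> wsum n id (mult f) = n /\ spt1do_mult (smallest f) (mult f).
Proof.
rewrite inE is_partitionE; split=> [/andP[/eqP wf /existsP[i /spt1do_atP fi]] | [wf fs]].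
  by rewrite (smallest_spt1do_mult fi).
rewrite wf eqxx; apply/existsP; case: (mult_cases f (smallest f)) => [|[i smi]].
  by case: fs => _ ->.
by exists i; apply/spt1do_atP; rewrite -smi.
Qed.

(* [t] is [0] or the smallest part of [h], and has parity [par]. *)
Definition raisable par t (h : nat -> nat) :=
  [/\ odd t = par, h t = (0 < t) & forall k, 0 < k < t -> h k = 0].

Lemma raisable0 f : raisable false 0 (mult f).
Proof. by split=> // k; rewrite ltn0 andbF. Qed.

Lemma raisable_smallest par f : 0 < n -> is_partition f -> distinct_parity par f ->
  0 < smallest f /\ raisable par (smallest f) (mult f).
Proof.
rewrite is_partitionE => n0 /eqP wf /distinct_parityP df; have ex_part : exists k, 0 < mult f k.
  case: (boolP [exists i : 'I_n, 0 < f i]) => [/existsP[i fi]|/existsPn no_part].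
    by exists i.+1; rewrite mult_ord.
  suff : wsum n id (mult f) = 0 by lia.
  rewrite /wsum big1 // => i _; move: (no_part i).
  by rewrite -eqn0Ngt -mult_ord => /eqP ->; rewrite muln0.
case: (ex_minnP ex_part) => s fs min_s.
have lt_s k : 0 < k < s -> mult f k = 0.
  by move=> /andP[_ ks]; case: (posnP (mult f k)) => // /min_s; rewrite leqNgt ks.
have s0 : 0 < s by move: fs; case: s {min_s lt_s}.
rewrite (smallestP fs lt_s) s0; case: (df s s0) => f1 par_s; split; split=> //; lia.
Qed.

End Multiplicity.

Lemma eq_spt1do_mult s h1 h2 : (forall k, 0 < k -> h1 k = h2 k) ->
  spt1do_mult s h1 -> spt1do_mult s h2.
Proof.
move=> eq_h [s0 h1s lt_s gt_s]; split=> [//|||k sk]; first by rewrite -eq_h.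
  by move=> k /andP[k0 ks]; rewrite -eq_h ?lt_s ?k0.
by rewrite -eq_h; [apply: gt_s | apply: leq_ltn_trans sk].
Qed.

(* Moving a part [s] to [s.-1], resp. [t] to [t.+1]; a part [0] stands for no
   part at all, so [shift_down 1] deletes a part 1 and [shift_up 0] creates one. *)
Definition shift_down s (h : nat -> nat) k := if k == s.-1 then 1 else if k == s then 0 else h k.
Definition shift_up t (h : nat -> nat) k := if k == t then 0 else if k == t.+1 then 1 else h k.

Section ShiftDown.
Variables (s : nat) (h : nat -> nat).
Hypothesis hs : spt1do_mult s h.

Lemma shift_down_move k : 0 < k -> shift_down s h k + (k == s) = h k + (k == s.-1).
Proof.
case: hs => s0 h1 lt_s _ k0; rewrite /shift_down; case: (eqVneq k s.-1) => [ks|_].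
  by subst k; rewrite lt_s ?k0 ?ltn_predL // ltn_eqF ?ltn_predL.
by case: (eqVneq k s) => [->|]; rewrite ?h1.
Qed.

Lemma wsum_shift_down L w : s <= L ->
  wsum L w (shift_down s h) + w s = wsum L w h + (if 1 < s then w s.-1 else 0).
Proof.
case: hs => s0 _ _ _ sL; have := wsum_move L w shift_down_move.
by rewrite s0 sL (leq_trans (leq_pred s) sL) andbT; case: s s0 {sL} => [|[]].
Qed.

Lemma distinct_parity_shift_down : distinct_parity_mult (~~ odd s) (shift_down s h).
Proof.
case: hs => s0 _ lt_s gt_s k k0; rewrite /shift_down.
case: (eqVneq k s.-1) => [->|_].
  by split=> // _; rewrite -{2}(prednK s0) /= negbK.
case: (eqVneq k s) => // neks; case: (ltngtP k s) => [ks|sk|eks]; last by rewrite eks eqxx in neks.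
- by rewrite lt_s ?k0.
- by case: (gt_s k sk) => -> par_k; split=> // /par_k; case: (odd k); case: (odd s).
Qed.

Lemma shift_up_shift_down h' : (forall k, 0 < k -> h' k = shift_down s h k) ->
  forall k, 0 < k -> shift_up s.-1 h' k = h k.
Proof.
case: hs => s0 h1 lt_s _ eq_h' k k0; rewrite /shift_up eq_h' // /shift_down.
case: (eqVneq k s.-1) => [ks|_]; first by subst k; rewrite lt_s // k0 ltn_predL.
by rewrite prednK //; case: (eqVneq k s) => [->|].
Qed.

End ShiftDown.

Section ShiftUp.
Variables (par : bool) (t : nat) (h : nat -> nat).
Hypotheses (dh : distinct_parity_mult par h) (ht : raisable par t h).

Lemma raisable_succ : h t.+1 = 0.
Proof.
case: ht => par_t _ _; case: (posnP (h t.+1)) => // /(dh (ltn0Sn t)).2.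
by rewrite /= par_t; case: par.
Qed.

Lemma shift_up_move k : 0 < k -> shift_up t h k + (k == t) = h k + (k == t.+1).
Proof.
case: ht => _ ht1 _ k0; rewrite /shift_up; case: (eqVneq k t) => [kt|_].
  by rewrite kt ht1 ltn_eqF // -kt k0.
by case: (eqVneq k t.+1) => [->|]; rewrite ?raisable_succ.
Qed.

Lemma wsum_shift_up L w : t < L ->
  wsum L w (shift_up t h) + (if 0 < t then w t else 0) = wsum L w h + w t.+1.
Proof.
move=> tL; have := wsum_move L w shift_up_move.
by rewrite tL (ltnW tL) andbT.
Qed.

Lemma spt1do_mult_shift_up : spt1do_mult t.+1 (shift_up t h).
Proof.
case: ht => par_t _ lt_t; rewrite /shift_up; split=> //.
- by rewrite ifN_eq ?eqxx // neq_ltn ltnSn orbT.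
- move=> k /andP[k0]; rewrite ltnS leq_eqVlt => /orP[/eqP->|kt]; first by rewrite eqxx.
  by rewrite !ifN_eq ?lt_t ?k0 //; lia.
- move=> k tk; rewrite !ifN_eq; try lia.
  case: (dh (ltn_trans (ltn0Sn t) tk)) => -> par_k; split=> // /par_k ->.
  by rewrite /= par_t; case: par.
Qed.

Lemma shift_down_shift_up h' : (forall k, 0 < k -> h' k = shift_up t h k) ->
  forall k, 0 < k -> shift_down t.+1 h' k = h k.
Proof.
case: ht => _ ht1 _ eq_h' k k0; rewrite /shift_down eq_h' // /shift_up /=.
case: (eqVneq k t) => [kt|_]; first by rewrite kt ht1 -kt k0.
by case: (eqVneq k t.+1) => [->|]; rewrite ?raisable_succ.
Qed.

End ShiftUp.

Section LowerRaise.
Variable N : nat.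
Hypothesis N0 : 0 < N.
Implicit Types (f : ptn N.+1) (g : ptn N).

Definition lower f : ptn N := ptn_of N (shift_down (smallest f) (mult f)).
Definition raise t g : ptn N.+1 := ptn_of N.+1 (shift_up t (mult g)).

Section Lower.
Variable f : ptn N.+1.
Hypothesis f_spt : f \in Spt1do N.+1.

Let wf : wsum N.+1 id (mult f) = N.+1. Proof. by case/Spt1doP: f_spt. Qed.
Let fs : spt1do_mult (smallest f) (mult f). Proof. by case/Spt1doP: f_spt. Qed.
Let sN : smallest f <= N.+1. Proof. by case: fs => _ f1 _ _; apply: (@mult_le _ f); rewrite f1. Qed.

Lemma wsum_id_shift_down : wsum N.+1 id (shift_down (smallest f) (mult f)) = N.
Proof.
have := wsum_shift_down fs id sN; rewrite wf.
by case: fs => s0 _ _ _; case: ifP => s1; cbv beta; lia.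
Qed.

Lemma shift_down_top : shift_down (smallest f) (mult f) N.+1 = 0.
Proof.
have := wsum_id_shift_down; rewrite wsum_recr /=.
by case: (shift_down _ _ N.+1) => // k; rewrite mulnS; lia.
Qed.

Lemma mult_lower k : 0 < k -> mult (lower f) k = shift_down (smallest f) (mult f) k.
Proof.
apply: mult_ptn_of => [j j0 | j jN].
  by case: (distinct_parity_shift_down fs j0) => le1 _; apply: leq_trans le1 N0.
rewrite leq_eqVlt in jN; case/orP: jN => [/eqP <-|jN]; first exact: shift_down_top.
by rewrite /shift_down !ifN_eq ?mult_gt //; lia.
Qed.

Lemma wsum_lower w : wsum N w (mult (lower f)) = wsum N.+1 w (shift_down (smallest f) (mult f)).
Proof. by rewrite wsum_recr shift_down_top muln0 addn0; apply: eq_wsum => k /mult_lower. Qed.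

Lemma lower_spec :
  [/\ is_partition (lower f), nparts (lower f) + (smallest f == 1) = nparts f
    & distinct_parity (~~ odd (smallest f)) (lower f)].
Proof.
split.
- by rewrite is_partitionE wsum_lower wsum_id_shift_down.
- have := wsum_shift_down fs (fun=> 1) sN; rewrite !npartsE wsum_lower.
  by case: fs => s0 _ _ _; case: ifP => s1; case: eqP => s_1; lia.
- apply/distinct_parityP => k k0; rewrite mult_lower //.
  exact: distinct_parity_shift_down.
Qed.

Lemma raisable_lower : raisable (~~ odd (smallest f)) (smallest f).-1 (mult (lower f)).
Proof.
case: fs => s0 _ lt_s _; split.
- by rewrite -{2}(prednK s0) /= negbK.
- by case: (posnP (smallest f).-1) => [-> //|s1]; rewrite mult_lower // /shift_down eqxx.
- move=> k /andP[k0 ks]; rewrite mult_lower // /shift_down !ifN_eq ?lt_s ?k0 //; lia.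
Qed.

Lemma smallest_lower : 1 < smallest f -> smallest (lower f) = (smallest f).-1.
Proof.
case: raisable_lower => _ low1 lt_s s1; apply: smallestP => //.
by rewrite low1; case: (smallest f) s1 => [|[]].
Qed.

End Lower.

Section Raise.
Variables (par : bool) (t : nat) (g : ptn N).
Hypotheses (dg : distinct_parity par g) (gt : raisable par t (mult g)).

Let dgm : distinct_parity_mult par (mult g). Proof. exact/distinct_parityP. Qed.
Let tN : t <= N.
Proof.
case: gt => _ gt1 _; case: posnP gt1 => [->|t0 gt1] //.
by apply: (@mult_le _ g); rewrite gt1.
Qed.

Lemma mult_raise k : 0 < k -> mult (raise t g) k = shift_up t (mult g) k.
Proof.
apply: mult_ptn_of => [j j0 | j jN]; rewrite /shift_up.
  by case: eqP => // _; case: eqP => // _; case: (dgm j0) => le1 _; apply: leq_trans le1 _.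
by rewrite !ifN_eq ?mult_gt //; lia.
Qed.

Hypothesis g_part : is_partition g.

Lemma raise_spec :
  [/\ raise t g \in Spt1do N.+1, smallest (raise t g) = t.+1
    & nparts (raise t g) = nparts g + (t == 0)].
Proof.
have raise_shape : spt1do_mult t.+1 (mult (raise t g)).
  by apply: eq_spt1do_mult (spt1do_mult_shift_up dgm gt) => k /mult_raise.
have wsum_raise w : wsum N.+1 w (mult (raise t g)) + (if 0 < t then w t else 0) =
    wsum N w (mult g) + w t.+1.
  rewrite -(wsum_mult_succ w g) -(wsum_shift_up dgm gt w (tN : t < N.+1)).
  by congr (_ + _); apply: eq_wsum => k /mult_raise.
have s_raise := smallest_spt1do_mult raise_shape.
split=> //.
  apply/Spt1doP; rewrite s_raise; split=> //.
  have /eqP wg : wsum N id (mult g) == N by rewrite -is_partitionE.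
  by have := wsum_raise id; rewrite wg; case: posnP => t0; lia.
by move: (wsum_raise (fun=> 1)); rewrite !npartsE; case: posnP => t0; lia.
Qed.

End Raise.

Lemma lower_raise par t g : is_partition g -> distinct_parity par g -> raisable par t (mult g) ->
  lower (raise t g) = g.
Proof.
move=> g_part dg gt; have [r_spt s_raise _] := raise_spec dg gt g_part.
have dgm := proj1 (distinct_parityP par g) dg.
apply: mult_inj => k k0; rewrite mult_lower // s_raise.
by apply: (shift_down_shift_up dgm gt) => // j; apply: (mult_raise dg gt).
Qed.

Lemma raise_lower f : f \in Spt1do N.+1 -> raise (smallest f).-1 (lower f) = f.
Proof.
move=> f_spt; have [_ _ dl] := lower_spec f_spt.
apply: mult_inj => k k0; rewrite (mult_raise dl (raisable_lower f_spt)) //.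
have /Spt1doP[_ fs] := f_spt.
by apply: (shift_up_shift_down fs) => // j; apply: mult_lower.
Qed.

End LowerRaise.

Definition Spt1do_nparts n b : {set ptn n} := [set f in Spt1do n | odd (nparts f).-1 == b].
Definition Distinct_nparts n par c : {set ptn n} :=
  [set g | [&& is_partition g, distinct_parity par g & odd (nparts g) == c]].

Lemma nparts_Spt1do n (f : ptn n) : f \in Spt1do n -> 0 < nparts f.
Proof.
rewrite inE => /andP[_ /existsP[i /and3P[/eqP fi1 _ _]]].
by rewrite /nparts (bigD1 i) //= fi1.
Qed.

Lemma odd_predE m b : 0 < m -> (odd m.-1 == b) = (odd m == ~~ b).
Proof. by case: m => //= m _; case: (odd m); case: b. Qed.

Section Classes.
Variable N : nat.
Hypothesis N0 : 0 < N.

Lemma card_lower (A : {set ptn N.+1}) (B : {set ptn N}) (tau : ptn N -> nat) :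
  {in A, forall f, [/\ f \in Spt1do N.+1, lower f \in B & tau (lower f) = (smallest f).-1]} ->
  {in B, forall g, exists par, [/\ is_partition g, distinct_parity par g,
                                  raisable par (tau g) (mult g) & raise (tau g) g \in A]} ->
  #|A| = #|B|.
Proof.
move=> lowA raiseB; apply: (@card_in_bij _ _ A B (@lower N) (fun g => raise (tau g) g)).
- by move=> f /lowA[].
- by move=> g /raiseB[par []].
- by move=> f /lowA[f_spt _ ->]; apply: raise_lower.
- by move=> g /raiseB[par [g_part dg gt _]]; apply: lower_raise gt.
Qed.

Local Notation S b := (Spt1do_nparts N.+1 b).

Lemma card_Spt1do_smallest_eq1 b :
  #|[set f in S b | smallest f == 1]| = #|Distinct_nparts N false b|.
Proof.
apply: (card_lower (tau := fun=> 0)) => [f | g].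
- move=> /setIdP[/setIdP[f_spt np_f] /eqP s1].
  have [l_part nl dl] := lower_spec N0 f_spt.
  rewrite s1 eqxx addn1 in nl dl; split; rewrite ?s1 //.
  by move: np_f; rewrite inE l_part dl -nl.
- rewrite inE => /and3P[g_part dg np_g]; exists false.
  have g0 := raisable0 g; have [r_spt s_raise nr] := raise_spec N0 dg g0 g_part.
  split=> //; apply/setIdP; split; last by rewrite s_raise.
  by apply/setIdP; split; rewrite // nr addn1.
Qed.

Lemma card_Spt1do_smallest_gt1 par b :
  #|[set f in S b | (smallest f != 1) && (odd (smallest f) == ~~ par)]| =
  #|Distinct_nparts N par (~~ b)|.
Proof.
apply: (card_lower (tau := @smallest N)) => [f | g].
- move=> /setIdP[/setIdP[f_spt np_f] /andP[s_ne1 /eqP par_s]].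
  have [l_part nl dl] := lower_spec N0 f_spt.
  have /Spt1doP[_ [s0 _ _ _]] := f_spt.
  have s1 : 1 < smallest f by case: (smallest f) s0 s_ne1 => [|[]].
  split=> //; last exact: smallest_lower.
  rewrite par_s negbK in dl; rewrite (negbTE s_ne1) addn0 in nl.
  by rewrite inE l_part dl nl -odd_predE ?nparts_Spt1do.
- rewrite inE => /and3P[g_part dg np_g]; exists par.
  have [s0 gt] := raisable_smallest N0 g_part dg.
  have [r_spt s_raise nr] := raise_spec N0 dg gt g_part.
  rewrite (gtn_eqF s0) addn0 in nr; split=> //; apply/setIdP; split.
    by apply/setIdP; split; rewrite // odd_predE nr ?np_g // -nr nparts_Spt1do.
  by case: gt => par_s _ _; rewrite s_raise oddS par_s eqxx andbT eqSS -lt0n.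
Qed.

Lemma card_Spt1do_nparts b : #|S b| =
  #|Distinct_nparts N true (~~ b)| + #|Distinct_nparts N false b| +
  #|Distinct_nparts N false (~~ b)|.
Proof.
rewrite -card_Spt1do_smallest_eq1 -!card_Spt1do_smallest_gt1.
rewrite -(cardsID [set f | smallest f == 1] (S b)).
rewrite -(cardsID [set f | ~~ odd (smallest f)] (S b :\: _)).
rewrite addnCA addnA; congr (_ + _ + _); apply: eq_card => f; rewrite !inE //;
  by case: (smallest f == 1); case: (odd (smallest f)); rewrite /= ?andbT ?andbF.
Qed.

End Classes.

Lemma Spt1do_npartsE n b (f : ptn n) : (f \in Spt1do_nparts n b) =
  is_partition f && [exists i, spt1do_at f i && (odd (nparts_gt f i) == b)].
Proof.
rewrite !inE -andbA; congr (_ && _).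
apply/andP/existsP => [[/existsP[i fi] np_f] | [i /andP[fi np_f]]].
  by exists i; rewrite fi nparts_gtE.
by split; [apply/existsP; exists i | rewrite -(nparts_gtE fi)].
Qed.

Lemma B0E n : B0 n = #|Spt1do_nparts n false|.
Proof.
apply: eq_card => f; rewrite Spt1do_npartsE inE; congr (_ && _).
by apply: eq_existsb => i; case: odd.
Qed.

Lemma B1E n : B1 n = #|Spt1do_nparts n true|.
Proof.
apply: eq_card => f; rewrite Spt1do_npartsE inE; congr (_ && _).
by apply: eq_existsb => i; case: odd.
Qed.

Lemma card_distinct_parity n par :
  #|[set g : ptn n | is_partition g && distinct_parity par g]| =
  #|Distinct_nparts n par false| + #|Distinct_nparts n par true|.
Proof.
rewrite -(cardsID [set g : ptn n | odd (nparts g)]) addnC.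
by congr (_ + _); apply: eq_card => g; rewrite !inE; case: odd; rewrite ?andbT ?andbF.
Qed.

Lemma pdo'E n : pdo' n = (#|Distinct_nparts n true false|%:Z - #|Distinct_nparts n true true|%:Z)%R.
Proof. by congr (_%:Z - _%:Z)%R; apply: eq_card => g; rewrite !inE; case: odd. Qed.

Theorem theorem3p1 (n : nat) (hn : (2 <= n)%N) :
  spt1do n = (2 * pde n.-1 + pdo n.-1)%N /\
  spt1do' n = (- pdo' n.-1)%R.
Proof.
case: n hn => [//|N]; rewrite ltnS => N0 /=.
rewrite /spt1do /spt1do' B0E B1E !card_Spt1do_nparts //.
rewrite /pde /pdo pdo'E !card_distinct_parity /=.
split; lia.
Qed.
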